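(* Let $\mathcal X$ be a finite set and let $\mathcal C$ be a set of probability measures on $(\mathcal X^\infty,\mathcal F)$. Suppose there is a probability measure $\rho$ on $(\mathcal X^\infty,\mathcal F)$ such that $\rho$ predicts every $\mu\in\mathcal C$ in expected average KL divergence. Then there exist a sequence $\mu_k\in\mathcal C$, $k\in\mathbb N$, and positive weights $w_k$, $k\in\mathbb N$, such that the measure $\nu:=\sum_{k\in\mathbb N} w_k\mu_k$ predicts every $\mu\in\mathcal C$ in expected average KL divergence.
   Context: $\mathcal X^\infty$ is the set of one-way infinite sequences $x_1,x_2,\dots$ with $x_i\in\mathcal X$, and $\mathcal F$ is the sigma-field generated by the cylinder sets $[x_{1..n}]$ (all infinite sequences starting with $x_1,\dots,x_n$), $n\in\mathbb N$. For probability measures $\mu,\rho$ the expected cumulative Kullback–Leibler divergence is $d_n(\mu,\rho):=\mathbf E_\mu\sum_{t=1}^n\sum_{a\in\mathcal X}\mu(x_t=a\mid x_{1..t-1})\log\frac{\mu(x_t=a\mid x_{1..t-1})}{\rho(x_t=a\mid x_{1..t-1})}$, equivalently $d_n(\mu,\rho)=-\sum_{x_{1..n}\in\mathcal X^n}\mu(x_{1..n})\log\frac{\rho(x_{1..n})}{\mu(x_{1..n})}$, where $\mu(x_{1..n})$ denotes the $\mu$-probability of the cylinder $[x_{1..n}]$. We say $\rho$ predicts $\mu$ in expected average KL divergence if $\frac1n d_n(\mu,\rho)\to 0$ as $n\to\infty$. *)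

From HB Require Import structures.
From mathcomp Require Import all_boot all_order all_algebra.
From mathcomp Require Import all_classical all_reals all_analysis.
Set Implicit Arguments. Unset Strict Implicit. Unset Printing Implicit Defensive.
Import Order.TTheory GRing.Theory Num.Theory.
Local Open Scope classical_set_scope.
Local Open Scope ring_scope.

(* The space X^oo of one-way infinite sequences over the finite alphabet X
   (indices start at 0: x_1 of the paper is [x 0]).  A point x0 : X is
   needed only because MathComp-Analysis measurable types are pointed. *)
Definition seqs (X : finType) (x0 : X) := nat -> X.
HB.instance Definition _ (X : finType) (x0 : X) := Choice.on (seqs x0).
HB.instance Definition _ (X : finType) (x0 : X) :=
  isPointed.Build (seqs x0) (fun _ => x0).
Arguments seqs {X} x0.

Definition cylinder (X : finType) (x0 : X) (n : nat) (w : {ffun 'I_n -> X})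
  : set (seqs x0) := [set x | forall i : 'I_n, x i = w i].
Arguments cylinder {X} x0 {n} w.

Definition cylinders (X : finType) (x0 : X) : set (set (seqs x0)) :=
  [set A | exists n (w : {ffun 'I_n -> X}), A = cylinder x0 w].
Arguments cylinders {X} x0.

Definition Xinf (X : finType) (x0 : X) := g_sigma_algebraType (cylinders x0).
Arguments Xinf {X} x0.

Definition kl_term (R : realType) (a b : R) : \bar R :=
  if a == 0 then 0%E else if b == 0 then +oo%E else (a * ln (a / b))%:E.

Definition kl_div (R : realType) (X : finType) (x0 : X)
  (mu rho : probability (Xinf x0) R) (n : nat) : \bar R :=
  (\sum_(w : {ffun 'I_n -> X})
     kl_term (fine (mu (cylinder x0 w : set (Xinf x0))))
             (fine (rho (cylinder x0 w : set (Xinf x0)))))%E.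

Definition predicts (R : realType) (X : finType) (x0 : X)
  (rho mu : probability (Xinf x0) R) : Prop :=
  ((fun n : nat => ((n%:R)^-1)%:E * kl_div mu rho n) @ \oo --> 0%E)%E.

From HB Require Import structures.
From mathcomp Require Import all_boot all_order all_algebra.
From mathcomp Require Import all_classical all_reals all_analysis.
From mathcomp Require Import ring lra zify.
Import Order.TTheory GRing.Theory Num.Theory.
Local Open Scope classical_set_scope.
Local Open Scope ring_scope.

(* Fix a tolerance [1/(k+1)] and a word length [n], and call a word typical
   for [mu] when [mu] and [rho] agree on it up to the factor
   [c = exp (n/(k+1))].  As [rho] predicts every [mu] in [C], the Markov
   inequality for the divergence puts eventually all but [1/(k+1)] of the
   [mu]-mass on typical words.  Greedily pick at most [c (k+1) + 1] members of
   [C] whose typical words cover, up to mass [1/(k+1)], the typical words of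
   every [mu] in [C]: each new member covers [rho]-mass at least
   [1/(c (k+1))].  Add, for every word, a member of [C] nearly maximising its
   probability, and mix all these countably many measures with weights
   polynomial in [(n, k, i)].  The mixture [nu] satisfies
   [mu <= c^6 (n+k+2)^8 nu] on covered typical words and
   [mu <= 2 c^4 (n+k+2)^8 |X|^(4n) nu] on the remaining mass [2/(k+1)], so
   [d_n(mu, nu) = O(n/(k+1) + log n + n log |X| / (k+1))], which is below
   [e n] once [k] and then [n] are large. *)

Section Cylinders.
Context {R : realType} {X : finType} {x0 : X}.
Local Notation T := (Xinf x0).

Lemma cylinder_measurable {n} (w : {ffun 'I_n -> X}) : measurable (cylinder x0 w : set T).
Proof. by apply: sub_gen_smallest; exists n, w. Qed.

Lemma sum_measure_cylinder (P : probability T R) n :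
  (\sum_(w : {ffun 'I_n -> X}) P (cylinder x0 w : set T))%E = 1%E.
Proof.
have -> : (\sum_(w : {ffun 'I_n -> X}) P (cylinder x0 w : set T))%E =
    P (\bigcup_(w in [set: {ffun 'I_n -> X}]) (cylinder x0 w : set T)).
  rewrite measure_fin_bigcup //.
  - rewrite (fsbigE (enum {ffun 'I_n -> X})) ?enum_uniq //.
      by rewrite big_enum_cond /=; apply: eq_bigl => w; rewrite in_setT.
    by move=> w; rewrite mem_enum.
  - exact: finite_finset.
  - by move=> w1 w2 _ _ [x [/= h1 h2]]; apply/ffunP => i; rewrite -h1 -h2.
  - by move=> w _; exact: cylinder_measurable.
rewrite -[RHS](@probability_setT _ T R P); congr (P _).
apply/seteqP; split => // x _; exists [ffun i => x (nat_of_ord i)] => // i.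
by rewrite ffunE.
Qed.

Definition pcyl (P : probability T R) {n} (w : {ffun 'I_n -> X}) : R :=
  fine (P (cylinder x0 w : set T)).

Lemma pcylE (P : probability T R) n (w : {ffun 'I_n -> X}) :
  P (cylinder x0 w : set T) = (pcyl P w)%:E.
Proof.
rewrite /pcyl fineK // ge0_fin_numE //.
by rewrite (le_lt_trans (probability_le1 _ (cylinder_measurable w))) ?ltey.
Qed.

Lemma pcyl_ge0 (P : probability T R) n (w : {ffun 'I_n -> X}) : 0 <= pcyl P w.
Proof. by rewrite -lee_fin -pcylE. Qed.

Lemma pcyl_le1 (P : probability T R) n (w : {ffun 'I_n -> X}) : pcyl P w <= 1.
Proof. by rewrite -lee_fin -pcylE; apply: probability_le1; exact: cylinder_measurable. Qed.

Lemma sum_pcyl (P : probability T R) n : \sum_(w : {ffun 'I_n -> X}) pcyl P w = 1.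
Proof.
apply: EFin_inj; rewrite -sumEFin -(sum_measure_cylinder P n).
by apply: eq_bigr => w _; rewrite pcylE.
Qed.

End Cylinders.

Section KLTerm.
Context {R : realType}.
Implicit Types a b c M : R.

Lemma kl_term_ge_sub a b : 0 <= a -> 0 <= b -> ((a - b)%:E <= kl_term a b)%E.
Proof.
move=> a0 b0; rewrite /kl_term; have [->|an0] := eqVneq a 0.
  by rewrite lee_fin sub0r oppr_le0.
have [_|bn0] := eqVneq b 0; first exact: leey.
have ap : 0 < a by rewrite lt_def an0.
have bp : 0 < b by rewrite lt_def bn0.
have /le_ln1Dx : -1 < b / a - 1 by rewrite ltrBrDl subrr divr_gt0.
rewrite addrC subrK lee_fin => ln_ba.
rewrite -[ln (a / b)]opprK -lnV ?posrE ?divr_gt0 // invf_div mulrN lerNr opprB.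
apply: le_trans (ler_wpM2l (ltW ap) ln_ba) _.
by rewrite mulrBr mulr1 mulrCA divff // mulr1.
Qed.

Lemma kl_term_ge_ln a b c : 0 < a -> 0 <= b -> 1 <= c -> c * b < a ->
  ((a * ln c - b)%:E <= kl_term a b)%E.
Proof.
move=> ap b0 c1 cba; rewrite /kl_term gt_eqF //.
have [_|bn0] := eqVneq b 0; first exact: leey.
have bp : 0 < b by rewrite lt_def bn0.
have c0 : 0 < c by apply: lt_le_trans c1.
have : a * ln c <= a * ln (a / b).
  apply: ler_wpM2l; first exact: ltW.
  by rewrite ler_ln ?posrE ?divr_gt0 // ler_pdivlMr // ltW.
rewrite lee_fin; lra.
Qed.

Lemma kl_term_le_ln a b M : 0 < a -> 0 < b -> a <= M * b -> (kl_term a b <= (a * ln M)%:E)%E.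
Proof.
move=> ap bp aMb; rewrite /kl_term !gt_eqF // lee_fin.
have M0 : 0 < M by move: (lt_le_trans ap aMb); rewrite pmulr_lgt0.
apply: ler_wpM2l; first exact: ltW.
by rewrite ler_ln ?posrE ?divr_gt0 // ler_pdivrMr.
Qed.

End KLTerm.

Section KLSum.
Context {R : realType} {T : finType}.
Implicit Types (p q : T -> R) (c K : R).

Lemma sumr_pred_le (P : pred T) [f : T -> R] : (forall y, 0 <= f y) ->
  \sum_(y | P y) f y <= \sum_y f y.
Proof. by move=> f0; rewrite [leRHS](bigID P) /= lerDl sumr_ge0. Qed.

Lemma sum_kl_term_ge0 p q : (forall y, 0 <= p y) -> (forall y, 0 <= q y) ->
  \sum_y q y <= \sum_y p y -> (0 <= \sum_y kl_term (p y) (q y))%E.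
Proof.
move=> p0 q0 qp.
have : (\sum_y (p y - q y)%:E <= \sum_y kl_term (p y) (q y))%E.
  by apply: lee_sum => y _; exact: kl_term_ge_sub.
apply: le_trans.
by rewrite sumEFin lee_fin sumrB subr_ge0.
Qed.

Lemma sum_kl_term_markov p q c K :
  (forall y, 0 <= p y) -> (forall y, 0 <= q y) -> \sum_y q y <= 1 -> 1 <= c ->
  (\sum_y kl_term (p y) (q y) <= K%:E)%E ->
  (\sum_(y | (0 < p y) && (c * q y < p y)) p y) * ln c <= K + 1.
Proof.
move=> p0 q0 q1 c1 hK.
pose f y := (if (0 < p y) && (c * q y < p y) then p y * ln c else 0) - q y.
have : (\sum_y (f y)%:E <= \sum_y kl_term (p y) (q y))%E.
  apply: lee_sum => y _; rewrite /f; case: ifPn => [/andP[py cq]|_].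
    exact: kl_term_ge_ln.
  apply: (@le_trans _ _ (p y - q y)%:E); last exact: kl_term_ge_sub.
  by rewrite lee_fin lerD2r.
move=> hf; have := le_trans hf hK; rewrite sumEFin lee_fin sumrB -big_mkcond /= -mulr_suml.
by move=> h; have := lerD h q1; rewrite subrK.
Qed.

Lemma sum_kl_term_le p q (M : T -> R) : (forall y, 0 <= p y) ->
  (forall y, 0 < p y -> 0 < q y /\ p y <= M y * q y) ->
  (\sum_y kl_term (p y) (q y) <= (\sum_y p y * ln (M y))%:E)%E.
Proof.
move=> p0 h; rewrite -sumEFin; apply: lee_sum => y _.
have [py|py] := ltP 0 (p y).
  by have [qy pM] := h y py; apply: kl_term_le_ln.
have -> : p y = 0 by apply/le_anti; rewrite py p0.
by rewrite /kl_term eqxx mul0r.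
Qed.

Lemma sum_kl_term_le_split p q (G : pred T) (MG MB d : R) :
  (forall y, 0 <= p y) -> \sum_y p y = 1 -> 1 <= MG -> 1 <= MB ->
  \sum_(y | ~~ G y) p y <= d ->
  (forall y, 0 < p y -> 0 < q y /\ p y <= (if G y then MG else MB) * q y) ->
  (\sum_y kl_term (p y) (q y) <= (ln MG + d * ln MB)%:E)%E.
Proof.
move=> p0 p1 MG1 MB1 hd h.
apply: le_trans (@sum_kl_term_le _ _ (fun y => if G y then MG else MB) p0 h) _.
rewrite lee_fin (bigID G) /=.
rewrite (eq_bigr (fun y => ln MG * p y)) => [|y ->]; last by rewrite mulrC.
rewrite [X in _ + X](eq_bigr (fun y => ln MB * p y)) => [|y /negbTE ->]; last first.
  by rewrite mulrC.
rewrite -!mulr_sumr; apply: lerD.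
  rewrite -[leRHS]mulr1; apply: ler_wpM2l; first exact: ln_ge0.
  by rewrite -p1 sumr_pred_le.
by rewrite mulrC; apply: ler_wpM2r; first exact: ln_ge0.
Qed.

(* The words where the ratio of [p] and [r] leaves [[1/c, c]]: those with
   [p > c r] are controlled by the Markov bound on the divergence, those with
   [r > c p] by the total [r]-mass. *)
Lemma kl_atypical_mass p (r : T -> R) c K :
  (forall y, 0 <= p y) -> (forall y, 0 <= r y) -> \sum_y r y <= 1 -> 1 < c ->
  (\sum_y kl_term (p y) (r y) <= K%:E)%E ->
  \sum_(y | ~~ [&& 0 < p y, p y <= c * r y & r y <= c * p y]) p y <=
    (K + 1) / ln c + c^-1.
Proof.
move=> p0 r0 r1 c1 hK.
have c0 : 0 < c by lra.
have lc : 0 < ln c by apply: ln_gt0.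
have h1 : \sum_(y | (0 < p y) && (c * r y < p y)) p y <= (K + 1) / ln c.
  by rewrite ler_pdivlMr // sum_kl_term_markov // ltW.
have h2 : \sum_(y | (0 < p y) && (c * p y < r y)) p y <= c^-1.
  apply: le_trans (_ : \sum_(y | (0 < p y) && (c * p y < r y)) (c^-1 * r y) <= _).
    by apply: ler_sum => y /andP[_ h]; rewrite ler_pdivlMl // ltW.
  rewrite -mulr_sumr -[leRHS]mulr1 ler_pM2l ?invr_gt0 //.
  exact: le_trans (sumr_pred_le _ r0) r1.
apply: le_trans (lerD h1 h2).
rewrite [X in _ <= X + _]big_mkcond [X in _ <= _ + X]big_mkcond -big_split /=.
rewrite big_mkcond; apply: ler_sum => y _.
have := p0 y; have := r0 y.
case: ifPn => hn ry py0; last by do 2 (case: ifP => _); lra.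
have [py|py] /= := ltP 0 (p y); last by lra.
move: hn; rewrite py /= negb_and -!ltNge => /orP[h|h]; rewrite h; case: ifP => _; lra.
Qed.

End KLSum.

Lemma kl_div_ge0 {R : realType} {X : finType} {x0 : X} (mu nu : probability (Xinf x0) R) n :
  (0 <= kl_div mu nu n)%E.
Proof.
by apply: sum_kl_term_ge0; [exact: pcyl_ge0 | exact: pcyl_ge0 | rewrite !sum_pcyl].
Qed.

Definition covered {T A : Type} (D : A -> pred T) (f : nat -> A) (m : nat) (y : T) :=
  has (fun i => D (f i) y) (iota 0 m).

Lemma covered_extend (T A : Type) (D : A -> pred T) f N a y :
  covered D (fun i => if i == N then a else f i) N.+1 y = covered D f N y || D a y.
Proof.
rewrite /covered -addn1 iotaD has_cat /= add0n eqxx orbF; congr (_ || _).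
by apply: eq_in_has => i; rewrite mem_iota add0n => /andP[_ iN]; rewrite ltn_eqF.
Qed.

(* Greedy covering: while some [a] satisfying [P] keeps [p a]-mass [th] on the
   uncovered part of [D a], add it.  As [p a <= c r] on [D a], each step covers
   [r]-mass [th / c], so the greedy stops after at most [c / th] steps. *)
Section GreedyCover.
Context {R : realType} {T : finType} {A : Type}.
Context {P : A -> Prop} {D : A -> pred T} {p : A -> T -> R} {r : T -> R} {c th : R}.
Hypotheses (c_gt0 : 0 < c) (pD : forall a y, P a -> D a y -> p a y <= c * r y).

Definition cover_done (f : nat -> A) (m : nat) :=
  forall a, P a -> \sum_(y | D a y && ~~ covered D f m y) p a y < th.

Lemma greedy_cover_step (a0 : A) N :
  (exists m f, [/\ (m <= N)%N, forall i, (i < m)%N -> P (f i) & cover_done f m]) \/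
  (exists f, (forall i, (i < N)%N -> P (f i)) /\
     N%:R * (th / c) <= \sum_(y | covered D f N y) r y).
Proof.
elim: N => [|N [[m [f [mN fP done]]]|[f [fP hf]]]].
- by right; exists (fun=> a0); split => //; rewrite mul0r sumr_ge0.
- by left; exists m, f; split => //; exact: leqW.
have [done|] := pselect (cover_done f N); first by left; exists N, f.
rewrite /cover_done => /existsNP[a /not_implyP[Pa /negP]]; rewrite -leNgt => ha.
right; exists (fun i => if i == N then a else f i); split.
  by move=> i; rewrite ltnS leq_eqVlt; case: eqP => [//|_ /= iN]; exact: fP.
under eq_bigl do rewrite covered_extend.
rewrite (bigID (covered D f N)) /= -natr1 mulrDl mul1r; apply: lerD.
  suff -> : \sum_(y | (covered D f N y || D a y) && covered D f N y) r y =
            \sum_(y | covered D f N y) r y by [].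
  by apply: eq_bigl => y; case: (covered D f N y); rewrite ?andbF.
have -> : \sum_(y | (covered D f N y || D a y) && ~~ covered D f N y) r y =
          \sum_(y | D a y && ~~ covered D f N y) r y.
  by apply: eq_bigl => y; case: (covered D f N y); rewrite ?andbF ?orbF ?andbT.
rewrite ler_pdivrMr // mulr_suml; apply: le_trans ha _.
by apply: ler_sum => y /andP[Dy _]; rewrite mulrC; exact: pD.
Qed.

Lemma greedy_cover (a0 : A) : (forall y, 0 <= r y) -> \sum_y r y <= 1 -> 0 < th ->
  exists m f, [/\ forall i, (i < m)%N -> P (f i), m%:R <= c / th + 1 & cover_done f m].
Proof.
move=> r0 r1 th0; pose N := (Num.truncn (c / th)).+1.
have [[m [f [mN fP done]]]|[f [_ hf]]] := greedy_cover_step a0 N.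
  exists m, f; split => //; apply: le_trans (_ : N%:R <= _); first by rewrite ler_nat.
  by rewrite -natr1 lerD2r truncn_le ltW ?divr_gt0.
have : 1 < N%:R * (th / c).
  by rewrite -ltr_pdivrMr ?divr_gt0 // mul1r invf_div truncnS_gt.
have := le_trans hf (le_trans (sumr_pred_le _ r0) r1); lra.
Qed.

End GreedyCover.

Lemma half_sup_selection {R : realType} {T A : Type} {P : A -> Prop} {p : A -> T -> R} {a0} :
  P a0 -> (forall a y, 0 <= p a y <= 1) ->
  exists g : T -> A, forall y, P (g y) /\ forall a, P a -> p a y <= 2 * p (g y) y.
Proof.
move=> Pa0 p01.
suff /choice[g hg] : forall y, exists b, P b /\ forall a, P a -> p a y <= 2 * p b y.
  by exists g.
move=> y; pose E := [set p a y | a in P].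
have supE : has_sup E.
  split; first by exists (p a0 y), a0.
  by exists 1 => _ [a _ <-]; have /andP[] := p01 a y.
have leE a : P a -> p a y <= sup E by move=> Pa; apply: sup_upper_bound => //; exists a.
have [s0|spos] := leP (sup E) 0.
  exists a0; split => // a /leE; have /andP[+ _] := p01 a0 y; lra.
have [_ [b Pb <-] hb] := sup_adherent (divr_gt0 spos (ltr0Sn R 1)) supE.
by exists b; split => // a /leE; lra.
Qed.

Section MixtureWeights.
Context {R : realType}.

Definition mix_weight (k : nat) : R := ((k.+1 * k.+2)%:R)^-1.

Lemma mix_weight_gt0 k : 0 < mix_weight k.
Proof. by rewrite /mix_weight invr_gt0 ltr0n muln_gt0. Qed.

Lemma sum_mix_weight N : \sum_(0 <= k < N) mix_weight k = 1 - harmonic N.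
Proof.
elim: N => [|N IH]; first by rewrite big_geq //= invr1 subrr.
rewrite big_nat_recr //= IH /mix_weight /= natrM.
by field; rewrite nat1r -natrD !pnatr_eq0.
Qed.

Lemma mix_weight_series : (\sum_(0 <= k <oo) (mix_weight k)%:E = 1)%E.
Proof.
apply: cvg_lim => //.
rewrite (_ : (fun N => _) = EFin \o (fun N => 1 - harmonic N)); last first.
  by apply/funext => N /=; rewrite sumEFin sum_mix_weight.
apply: cvg_EFin; first exact: nearW.
by rewrite -[X in _ --> X]subr0; apply: cvgB; [exact: cvg_cst | exact: cvg_harmonic].
Qed.

End MixtureWeights.

Lemma mnormalize_mass1 d (T : measurableType d) (R : realType)
    (mu : {measure set T -> \bar R}) (P : probability T R) :
  mu setT = 1%E -> forall A, mnormalize mu P A = mu A.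
Proof. by move=> mu1 A; rewrite /mnormalize mu1 onee_eq0 /= invr1 mule1. Qed.

Section Mixture.
Context {R : realType} {X : finType} {x0 : X}.
Local Notation T := (Xinf x0).

Lemma mixture_exists (mus : nat -> probability T R) : exists nu : probability T R,
  forall A, nu A = (\sum_(0 <= k <oo) ((mix_weight k)%:E * mus k A))%E.
Proof.
pose mix := mseries (fun k => mscale (NngNum (ltW (@mix_weight_gt0 R k))) (mus k)) 0.
have mixE A : mix A = (\sum_(0 <= k <oo) ((mix_weight k)%:E * mus k A))%E by [].
have mix1 : mix setT = 1%E.
  rewrite mixE -mix_weight_series; apply: eq_eseriesr => k _.
  by rewrite probability_setT mule1.
by exists (mnormalize mix (mus 0%N)) => A; exact: mnormalize_mass1.
Qed.

Lemma pcyl_mixture_ge (nu : probability T R) (mus : nat -> probability T R) :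
  (forall A, nu A = (\sum_(0 <= k <oo) ((mix_weight k)%:E * mus k A))%E) ->
  forall j n (y : {ffun 'I_n -> X}), mix_weight j * pcyl (mus j) y <= pcyl nu y.
Proof.
move=> hnu j n y; rewrite -lee_fin EFinM -!pcylE hnu.
have ge0 k : (0 <= (mix_weight k)%:E * mus k (cylinder x0 y : set T))%E.
  by apply: mule_ge0; [rewrite lee_fin ltW ?mix_weight_gt0 | exact: measure_ge0].
have := @nneseries_lim_ge R (fun k => (mix_weight k)%:E * mus k (cylinder x0 y : set T))%E
  xpredT 0 j.+1 (fun k _ _ => ge0 k).
apply: le_trans.
by rewrite big_nat_recr //= leeDr // sume_ge0.
Qed.

End Mixture.

(* Codes growing only polynomially, so that the mixture weight of the
   [triple_code n k i]-th component is at least an inverse polynomial in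
   [n], [k], [i]. *)
Definition pair_code (a b : nat) : nat := ((a + b) ^ 2 + b)%N.
Definition triple_code (n k i : nat) : nat := pair_code (pair_code n k) i.

Lemma pair_code_lt [a b a' b' : nat] :
  (a + b < a' + b')%N -> (pair_code a b < pair_code a' b')%N.
Proof.
rewrite /pair_code => lt_ab; apply: (@leq_trans ((a + b).+1 ^ 2)).
  by move: (a + b) (leq_addl a b) => s; nia.
by apply: leq_trans (leq_addr _ _); rewrite leq_exp2r.
Qed.

Lemma pair_code_inj [a b a' b' : nat] : pair_code a b = pair_code a' b' -> a = a' /\ b = b'.
Proof.
move=> eq_code; have [lt|lt|hs] := ltngtP (a + b) (a' + b').
- by move: (pair_code_lt lt); rewrite eq_code ltnn.
- by move: (pair_code_lt lt); rewrite -eq_code ltnn.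
have eqb : b = b' by move: eq_code; rewrite /pair_code hs => /addnI.
by move: hs; rewrite eqb => /addIn.
Qed.

Lemma triple_code_inj [n k i n' k' i' : nat] :
  triple_code n k i = triple_code n' k' i' -> [/\ n = n', k = k' & i = i'].
Proof. by move=> /pair_code_inj [/pair_code_inj [-> ->] ->]. Qed.

Lemma triple_code_bound n k i :
  ((triple_code n k i).+1 * (triple_code n k i).+2 <= ((n + k) ^ 2 + k + i + 2) ^ 4)%N.
Proof.
rewrite /triple_code [pair_code (pair_code _ _) _]/pair_code -/(pair_code n k).
move: (pair_code n k) => s; set x := ((s + i) ^ 2 + i)%N.
apply: (@leq_trans (x.+2 * x.+2)); first by rewrite leq_mul2r leqnSn orbT.
have h : (x.+2 <= (s + i + 2) ^ 2)%N by rewrite /x; nia.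
by rewrite mulnn (_ : 4 = 2 * 2)%N // expnM leq_exp2r.
Qed.

Lemma mix_weight_triple_ge {R : realType} n k i (B : R) :
  ((n + k) ^ 2 + k + i + 2)%N%:R <= B -> (B ^+ 4)^-1 <= mix_weight (triple_code n k i).
Proof.
move=> hB; have B0 : 0 < B by apply: lt_le_trans hB; rewrite ltr0n addn2.
rewrite /mix_weight lef_pV2 ?posrE ?exprn_gt0 ?ltr0n ?muln_gt0 //.
apply: le_trans (_ : (((n + k) ^ 2 + k + i + 2) ^ 4)%N%:R <= _).
  by rewrite ler_nat triple_code_bound.
rewrite natrX; apply: lerXn2r => //; rewrite ?nnegrE ?ler0n //; exact: ltW.
Qed.

Lemma triple_enumeration {A : Type} {P : A -> Prop} {a0 : A} {f : nat -> nat -> nat -> A} :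
  P a0 -> (forall n k i, P (f n k i)) ->
  exists g : nat -> A, (forall j, P (g j)) /\ forall n k i, g (triple_code n k i) = f n k i.
Proof.
move=> Pa0 Pf.
have /choice[g hg] : forall j,
    exists b, P b /\ forall n k i, triple_code n k i = j -> b = f n k i.
  move=> j; have [[[[n k] i] /= codej]|none] :=
    pselect (exists nki : nat * nat * nat, triple_code nki.1.1 nki.1.2 nki.2 = j).
    exists (f n k i); split => // n' k' i' codej'.
    by case: (triple_code_inj (etrans codej' (esym codej))) => -> -> ->.
  by exists a0; split => // n k i codej; case: none; exists (n, k, i).
by exists g; split => [j|n k i]; [case: (hg j) | apply: (hg _).2].
Qed.

Section Asymptotics.
Context {R : realType}.

(* From [ln y <= y - 1] at [y = x / z] with [z = 2 / e]. *)
Lemma ln_le_mul_eventually [a e : R] : 0 <= a -> 0 < e ->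
  exists N, forall n, (N <= n)%N -> ln (n%:R + a + 1) <= e * n%:R.
Proof.
move=> a0 e0; pose z := 2 / e; have z0 : 0 < z by rewrite divr_gt0.
pose B := (e * (a + 1) / 2 + ln z) * z.
exists (Num.truncn B).+1 => n hn.
have hB : B < n%:R by apply: lt_le_trans (truncnS_gt B) _; rewrite ler_nat.
have pos : 0 < n%:R + a + 1 by have := ler0n R n; lra.
have /le_ln1Dx : -1 < (n%:R + a + 1) / z - 1 by rewrite ltrBrDl subrr divr_gt0.
rewrite addrC subrK ln_div ?posrE //.
have -> : (n%:R + a + 1) / z = e * (n%:R + a + 1) / 2 by rewrite /z invf_div; field.
have ez : e * z = 2 by rewrite /z; field; exact: lt0r_neq0.
have : B * e < n%:R * e by rewrite ltr_pM2r.
rewrite /B -mulrA [z * e]mulrC ez => hh.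
have lz : ln z <= z by have := ln_sublinear z0; lra.
nra.
Qed.

Lemma avg_cvg0 (u : nat -> \bar R) :
  (forall e, 0 < e -> exists N, forall n, (N <= n)%N ->
      (0 <= u n)%E /\ (u n <= (e * n%:R)%:E)%E) ->
  ((fun n => ((n%:R)^-1)%:E * u n) @ \oo --> 0%E)%E.
Proof.
move=> h.
have hfin e : 0 < e -> exists N, forall n, (N <= n)%N ->
    exists x, u n = x%:E /\ 0 <= x <= e * n%:R.
  move=> e0; have [N hN] := h e e0; exists N => n /hN [].
  by case: (u n) => [x||] //=; rewrite !lee_fin => h0 h1; exists x; rewrite h0 h1.
apply/fine_cvgP; split.
  have [N hN] := hfin 1 ltr01; exists N.+1 => // n /= hn.
  by have [x [-> _]] := hN n (ltnW hn); rewrite -EFinM.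
apply/cvgrPdist_le => e e0; have [N hN] := hfin e e0; exists N.+1 => // n /= hn.
have [x [-> /andP[x_ge0 xe]]] := hN n (ltnW hn).
have n0 : (0 < n%:R :> R) by rewrite ltr0n; apply: leq_trans hn.
rewrite -EFinM /= sub0r normrN ger0_norm; last by rewrite mulr_ge0 // invr_ge0 ltW.
by rewrite mulrC ler_pdivrMr // mulrC.
Qed.

Lemma avg_cvg0_le [v : nat -> \bar R] [e : R] : 0 < e ->
  ((fun n => ((n%:R)^-1)%:E * v n) @ \oo --> 0%E)%E ->
  exists N, forall n, (N <= n)%N -> (v n <= (e * n%:R)%:E)%E.
Proof.
move=> e0 /fine_cvgP [[N1 _ hf] /cvgrPdist_le /(_ e e0) [N2 _ hc]].
exists (maxn (maxn N1 N2) 1) => n; rewrite !geq_max => /andP[/andP[h1 h2] h3].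
have n0 : (0 < n%:R :> R) by rewrite ltr0n.
move: (hf n h1) (hc n h2) => /=; case: (v n) => [x||] /=.
- rewrite -EFinM /= sub0r normrN lee_fin => _ hx.
  rewrite -ler_pdivrMr // mulrC; exact: le_trans (ler_norm _) hx.
- by rewrite mulry gtr0_sg ?invr_gt0 // mul1e.
- by move=> _ _; exact: leNye.
Qed.

End Asymptotics.

Section Arithmetic.
Context {R : realType}.

Lemma code_index_le (a b c x M i : R) : 0 <= a -> 0 <= b -> 1 <= c -> 1 <= x ->
  M <= c * (b + 1) + 1 -> i + 1 <= M + x ->
  (a + b) ^+ 2 + b + i + 2 <= (a + b + 2) ^+ 2 * (c * x).
Proof.
move=> a0 b0 c1 x1 hM hi.
have cx1 : 1 <= c * x by rewrite mulr_ege1.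
have f1 : 0 <= (a + b) ^+ 2 + b + 2 by rewrite !addr_ge0 // sqr_ge0.
have f2 : (a + b) ^+ 2 + b + 2 <= ((a + b) ^+ 2 + b + 2) * (c * x) by rewrite ler_peMr.
have f3 : c * (b + 1) <= (b + 1) * (c * x).
  by rewrite mulrA [(b + 1) * c]mulrC ler_peMr // mulr_ge0 //; lra.
have f4 : x <= c * x by rewrite ler_peMl //; lra.
have f5 : (a + b) ^+ 2 + 2 * b + 4 <= (a + b + 2) ^+ 2.
  have -> : (a + b + 2) ^+ 2 = (a + b) ^+ 2 + 4 * a + 4 * b + 4 by rewrite !expr2; ring.
  lra.
have f6 : ((a + b) ^+ 2 + 2 * b + 4) * (c * x) <= (a + b + 2) ^+ 2 * (c * x).
  by rewrite ler_wpM2r //; lra.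
have f7 : ((a + b) ^+ 2 + b + 2) * (c * x) + (b + 1) * (c * x) + c * x =
  ((a + b) ^+ 2 + 2 * b + 4) * (c * x) by ring.
lra.
Qed.

Lemma atypical_bound_arith (n kk c : R) : 1 <= kk -> 4 * kk ^+ 2 <= n -> 1 + n / kk <= c ->
  ((2 * kk ^+ 2)^-1 * n + 1) / (n / kk) + c^-1 <= kk^-1.
Proof.
move=> kk1 hn hc; have kk0 : 0 < kk by lra.
have n0 : 0 < n.
  have : 0 < kk ^+ 2 by exact: exprn_gt0.
  lra.
have t0 : 0 < n / kk by apply: divr_gt0.
have hc' : c^-1 <= kk / n.
  rewrite -invf_div lef_pV2 ?posrE //; [lra | apply: lt_le_trans hc; lra].
have -> : ((2 * kk ^+ 2)^-1 * n + 1) / (n / kk) = (2 * kk)^-1 + kk / n.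
  by field; rewrite ?gt_eqF.
have h2 : kk / n <= (4 * kk)^-1.
  rewrite ler_pdivrMr // mulrC ler_pdivlMr; last by lra.
  by move: hn; rewrite expr2; lra.
have : (2 * kk)^-1 + (4 * kk)^-1 + (4 * kk)^-1 = kk^-1 by field; rewrite gt_eqF.
lra.
Qed.

(* The [n / kk] terms add up to at most [(14 + 8 lX) n / kk], the [L] terms to
   [24 L] and the remaining one to [2]. *)
Lemma kl_bound_arith (n kk L lX e l2 : R) : 0 < n -> 1 <= kk -> 0 <= L -> 0 <= lX ->
  l2 <= 1 -> (14 + 8 * lX) / kk <= e / 2 -> L <= e / 96 * n -> 2 <= e / 4 * n ->
  2 * (n / kk) + 4 * (2 * L + n / kk) +
  2 / kk * (l2 + 4 * (2 * L + n / kk + n * lX)) <= e * n.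
Proof.
move=> n0 kk1 L0 lX0 l21 hA hL h2; have kk0 : 0 < kk by lra.
set ik := kk^-1; have ik0 : 0 < ik by rewrite invr_gt0.
have ik1 : ik <= 1 by rewrite invr_le1 // unitfE gt_eqF.
have a1 : n * ik * ik <= n * ik by rewrite ler_piMr // mulr_ge0 // ltW.
have a2 : L * ik <= L by rewrite ler_piMr.
have a3 : ik * l2 <= 1 by nra.
have a4 : n * ((14 + 8 * lX) * ik) <= n * (e / 2) by rewrite ler_wpM2l // ltW.
nra.
Qed.

End Arithmetic.

Section Construction.
Context {R : realType} {X : finType} {x0 : X}.
Local Notation Pr := (probability (Xinf x0) R).
Variables (C : set Pr) (rho : Pr).

Definition ratio_bound (n k : nat) : R := expR (n%:R / k.+1%:R).

Definition typical_word n k (P : Pr) (y : {ffun 'I_n -> X}) : bool :=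
  [&& 0 < pcyl P y, pcyl P y <= ratio_bound n k * pcyl rho y
    & pcyl rho y <= ratio_bound n k * pcyl P y].

Definition typical n k (P : Pr) : Prop :=
  C P /\ \sum_(y | ~~ typical_word n k P y) pcyl P y <= k.+1%:R^-1.

Lemma typical_eventually (mu : Pr) k : C mu -> predicts rho mu ->
  exists N, forall n, (N <= n)%N -> typical n k mu.
Proof.
move=> Cmu rho_mu; pose kk : R := k.+1%:R.
have kk1 : 1 <= kk by rewrite ler1n.
have eps0 : 0 < (2 * kk ^+ 2)^-1 by rewrite invr_gt0 mulr_gt0 // exprn_gt0 //; lra.
have [N hN] := avg_cvg0_le eps0 rho_mu.
exists (maxn N (4 * k.+1 ^ 2)) => n; rewrite geq_max => /andP[nN nk]; split => //.
have n0 : 0 < n%:R / kk.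
  by apply: divr_gt0; [rewrite ltr0n (leq_trans _ nk) // muln_gt0 expn_gt0 | lra].
have c1 : 1 < ratio_bound n k by rewrite /ratio_bound expR_gt1.
have r1 : \sum_(w : {ffun 'I_n -> X}) pcyl rho w <= 1 by rewrite sum_pcyl.
apply: le_trans (kl_atypical_mass _ _ _ _ (pcyl_ge0 mu n) (pcyl_ge0 rho n) r1 c1 (hN n nN)) _.
rewrite expRK; apply: atypical_bound_arith => //; last exact: expR_ge1Dx.
by move: nk; rewrite -(ler_nat R) natrM natrX.
Qed.

Lemma typical_cover n k : exists m (f : nat -> Pr),
  [/\ forall i, (i < m)%N -> typical n k (f i),
      m%:R <= ratio_bound n k * k.+1%:R + 1
    & forall P, typical n k P ->
        \sum_(y | typical_word n k P y && ~~ covered (typical_word n k) f m y) pcyl P y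
          < k.+1%:R^-1].
Proof.
have pD P y : typical n k P -> typical_word n k P y ->
    pcyl P y <= ratio_bound n k * pcyl rho y by move=> _ /and3P[].
have r1 : \sum_(w : {ffun 'I_n -> X}) pcyl rho w <= 1 by rewrite sum_pcyl.
have th0 : 0 < k.+1%:R^-1 :> R by rewrite invr_gt0.
have [m [f [fP hm done]]] := greedy_cover (expR_gt0 _) pD rho (pcyl_ge0 rho n) r1 th0.
by exists m, f; split => //; rewrite -[k.+1%:R]invrK.
Qed.

Lemma dominating_sequence n [mu0 : Pr] : C mu0 -> exists g : nat -> Pr,
  (forall j, C (g j)) /\
  forall (y : {ffun 'I_n -> X}) P, C P -> pcyl P y <= 2 * pcyl (g (enum_rank y)) y.
Proof.
move=> Cmu0; have p01 (P : Pr) (y : {ffun 'I_n -> X}) : 0 <= pcyl P y <= 1.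
  by rewrite pcyl_ge0 pcyl_le1.
have [g hg] := half_sup_selection Cmu0 p01.
exists (fun j => g (nth [ffun=> x0] (enum {ffun 'I_n -> X}) j)); split.
  by move=> j; case: (hg (nth [ffun=> x0] (enum {ffun 'I_n -> X}) j)).
by move=> y P CP; rewrite nth_enum_rank; apply: (hg y).2.
Qed.

(* The components [comp n k i] with [i < M n k] cover the typical words; each
   of the following [#|X| ^ n] ones nearly maximises the probability of one
   word over [C]. *)
Lemma component_family [mu0 : Pr] : C mu0 ->
  exists (M : nat -> nat -> nat) (comp : nat -> nat -> nat -> Pr),
  [/\ forall n k i, C (comp n k i),
      forall n k, (M n k)%:R <= ratio_bound n k * k.+1%:R + 1,
      forall n k P, typical n k P ->
        \sum_(y | typical_word n k P y &&
                  ~~ covered (typical_word n k) (comp n k) (M n k) y) pcyl P y < k.+1%:R^-1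
    & forall n k (y : {ffun 'I_n -> X}), exists2 i, (i < M n k + #|X| ^ n)%N &
        forall P, C P -> pcyl P y <= 2 * pcyl (comp n k i) y].
Proof.
move=> Cmu0.
have /choice[M /choice[F hF]] := fun nk : nat * nat => typical_cover nk.1 nk.2.
have /choice[G hG] := fun n => dominating_sequence n Cmu0.
pose comp n k i := if (i < M (n, k))%N then F (n, k) i else G n (i - M (n, k))%N.
exists (fun n k => M (n, k)), comp; split.
- move=> n k i; rewrite /comp; case: ifP => [iM|_]; last exact: (hG n).1.
  by have [/(_ i iM) []] := hF (n, k).
- by move=> n k; have [] := hF (n, k).
- move=> n k P typP; have [_ _ /(_ P typP)] := hF (n, k).
  congr (_ < _); apply: eq_bigl => y; congr (_ && ~~ _).
  by apply: eq_in_has => i; rewrite mem_iota /comp /= => ->.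
move=> n k y; exists (M (n, k) + enum_rank y)%N.
  by rewrite ltn_add2l; case: (enum_rank y) => r /=; rewrite card_ffun card_ord.
by move=> P CP; rewrite /comp ltnNge leq_addr /= addKn; exact: (hG n).2.
Qed.

End Construction.

Section MixtureEstimate.
Context {R : realType} {X : finType} {x0 : X}.
Local Notation Pr := (probability (Xinf x0) R).
Context {C : set Pr} {rho nu : Pr} {M : nat -> nat -> nat} {comp : nat -> nat -> nat -> Pr}.
Hypothesis M_le : forall n k, (M n k)%:R <= ratio_bound n k * k.+1%:R + 1 :> R.
Hypothesis comp_cover : forall n k P, typical C rho n k P ->
  \sum_(y | typical_word rho n k P y &&
            ~~ covered (typical_word rho n k) (comp n k) (M n k) y) pcyl P y < k.+1%:R^-1.
Hypothesis comp_dominates : forall n k (y : {ffun 'I_n -> X}),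
  exists2 i, (i < M n k + #|X| ^ n)%N & forall P, C P -> pcyl P y <= 2 * pcyl (comp n k i) y.
Hypothesis nu_ge : forall n k i (y : {ffun 'I_n -> X}),
  mix_weight (triple_code n k i) * pcyl (comp n k i) y <= pcyl nu y.

Definition index_bound n k : R := (n%:R + k%:R + 2) ^+ 2 * ratio_bound n k.

Lemma pcyl_component_le n k i (y : {ffun 'I_n -> X}) (b : R) :
  ((n + k) ^ 2 + k + i + 2)%N%:R <= b -> pcyl (comp n k i) y <= b ^+ 4 * pcyl nu y.
Proof.
move=> hb; have b0 : 0 < b by apply: lt_le_trans hb; rewrite ltr0n addn2.
rewrite -ler_pdivrMl ?exprn_gt0 //; apply: le_trans (nu_ge n k i y).
by apply: ler_wpM2r; [exact: pcyl_ge0 | exact: mix_weight_triple_ge].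
Qed.

Lemma code_index_le_bound n k i m : (0 < m)%N -> (i < M n k + m)%N ->
  ((n + k) ^ 2 + k + i + 2)%N%:R <= index_bound n k * m%:R.
Proof.
move=> m0 im; rewrite /index_bound -mulrA !natrD natrX natrD.
apply: (@code_index_le _ _ _ _ _ (M n k)%:R); rewrite ?ler0n ?ler1n //.
- by rewrite -[1]expR0 ler_expR divr_ge0.
- by rewrite natr1; exact: M_le.
- by rewrite natr1 -natrD ler_nat.
Qed.

Lemma pcyl_covered_le n k (P : Pr) (y : {ffun 'I_n -> X}) :
  typical_word rho n k P y -> covered (typical_word rho n k) (comp n k) (M n k) y ->
  pcyl P y <= ratio_bound n k ^+ 2 * index_bound n k ^+ 4 * pcyl nu y.
Proof.
move=> /and3P[_ hP _] /hasP[i]; rewrite mem_iota add0n => /andP[_ iM] /and3P[_ _ hr].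
have c0 : 0 <= ratio_bound n k :> R by exact/ltW/expR_gt0.
have /pcyl_component_le hq : ((n + k) ^ 2 + k + i + 2)%N%:R <= index_bound n k.
  by have := code_index_le_bound n k i 1 isT; rewrite mulr1; apply; rewrite addn1 ltnS ltnW.
apply: (le_trans hP); rewrite -mulrA (expr2 (ratio_bound n k)) -mulrA.
by apply: ler_wpM2l => //; apply: (le_trans hr); apply: ler_wpM2l.
Qed.

Lemma pcyl_dominated_le n k (P : Pr) (y : {ffun 'I_n -> X}) : C P ->
  pcyl P y <= 2 * (index_bound n k * (#|X| ^ n)%:R) ^+ 4 * pcyl nu y.
Proof.
move=> CP; have [i iM /(_ P CP) hP] := comp_dominates n k y.
have Xn0 : (0 < #|X| ^ n)%N by rewrite expn_gt0; apply/orP; left; apply/card_gt0P; exists x0.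
apply: (le_trans hP); rewrite -mulrA; apply: ler_wpM2l => //.
by apply: pcyl_component_le; exact: code_index_le_bound.
Qed.

Lemma kl_mixture_le n k (mu : Pr) : typical C rho n k mu ->
  (kl_div mu nu n <= (ln (ratio_bound n k ^+ 2 * index_bound n k ^+ 4) +
     2 * k.+1%:R^-1 * ln (2 * (index_bound n k * (#|X| ^ n)%:R) ^+ 4))%:E)%E.
Proof.
move=> [Cmu typ_mu].
have c1 : 1 <= ratio_bound n k :> R by rewrite -[1]expR0 ler_expR divr_ge0.
have B1 : 1 <= index_bound n k.
  by rewrite mulr_ege1 // exprn_ege1 //; have := ler0n R n; have := ler0n R k; lra.
have Xn1 : 1 <= (#|X| ^ n)%:R :> R.
  by rewrite ler1n expn_gt0; apply/orP; left; apply/card_gt0P; exists x0.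
pose G y := typical_word rho n k mu y && covered (typical_word rho n k) (comp n k) (M n k) y.
apply: (@sum_kl_term_le_split _ _ _ _ G).
- exact: pcyl_ge0.
- exact: sum_pcyl.
- by rewrite mulr_ege1 // exprn_ege1.
- by rewrite mulr_ege1 ?exprn_ege1 ?ler1n // mulr_ege1.
- rewrite (bigID (typical_word rho n k mu)) /= mulr_natl mulr2n; apply: lerD.
    rewrite (eq_bigl (fun y => typical_word rho n k mu y &&
      ~~ covered (typical_word rho n k) (comp n k) (M n k) y)) => [|y].
      exact/ltW/comp_cover.
    by rewrite /G; case: (typical_word rho n k mu y); rewrite ?andbF ?andbT.
  rewrite (eq_bigl (fun y => ~~ typical_word rho n k mu y)) // => y.
  by rewrite /G; case: (typical_word rho n k mu y); rewrite ?andbF ?andbT.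
move=> y py; have hd := pcyl_dominated_le _ k _ y Cmu.
have MB0 : 0 < 2 * (index_bound n k * (#|X| ^ n)%:R) ^+ 4.
  by rewrite mulr_gt0 // exprn_gt0 // mulr_gt0; lra.
split; first by rewrite -(pmulr_rgt0 _ MB0); exact: lt_le_trans py hd.
by case: ifP => [/andP[]|_]; [exact: pcyl_covered_le | exact: hd].
Qed.

Lemma kl_mixture_bound_le n k (e : R) : (0 < n)%N ->
  (14 + 8 * ln (#|X|%:R : R)) / k.+1%:R <= e / 2 ->
  ln (n%:R + k%:R + 2 : R) <= e / 96 * n%:R -> 2 <= e / 4 * n%:R ->
  ln (ratio_bound n k ^+ 2 * index_bound n k ^+ 4) +
    2 * k.+1%:R^-1 * ln (2 * (index_bound n k * (#|X| ^ n)%:R) ^+ 4) <= e * n%:R.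
Proof.
move=> n0 hk hL he.
have X0 : 0 < #|X|%:R :> R by rewrite ltr0n; apply/card_gt0P; exists x0.
have nk0 : 0 < n%:R + k%:R + 2 :> R by have := ler0n R n; have := ler0n R k; lra.
have c0 : 0 < ratio_bound n k :> R by exact: expR_gt0.
have B0 : 0 < index_bound n k by rewrite mulr_gt0 // exprn_gt0.
have lnB : ln (index_bound n k) = 2 * ln (n%:R + k%:R + 2) + n%:R / k.+1%:R.
  rewrite /index_bound lnM ?posrE ?exprn_gt0 // lnXn // /ratio_bound expRK.
  by congr (_ + _); rewrite mulr_natl.
have Xn0 : 0 < (#|X| ^ n)%:R :> R by rewrite natrX exprn_gt0.
have lnMG : ln (ratio_bound n k ^+ 2 * index_bound n k ^+ 4) =
    2 * (n%:R / k.+1%:R) + 4 * ln (index_bound n k).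
  rewrite lnM ?posrE ?exprn_gt0 // lnXn // lnXn // /ratio_bound expRK.
  by congr (_ + _); rewrite [RHS]mulr_natl.
have lnMB : ln (2 * (index_bound n k * (#|X| ^ n)%:R) ^+ 4) =
    ln 2 + 4 * (ln (index_bound n k) + n%:R * ln (#|X|%:R : R)).
  rewrite lnM ?posrE ?exprn_gt0 ?mulr_gt0 // lnXn ?mulr_gt0 // lnM ?posrE //.
  by rewrite natrX lnXn // [in RHS]mulr_natl [n%:R * _]mulr_natl.
rewrite lnMG lnMB lnB; apply: kl_bound_arith => //.
- by rewrite ltr0n.
- by rewrite ler1n.
- by rewrite ln_ge0 //; have := ler0n R n; have := ler0n R k; lra.
- by rewrite ln_ge0 // ler1n; apply/card_gt0P; exists x0.
- have /le_ln1Dx : -1 < 1 :> R by lra.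
  by rewrite -[1 + 1]/2%:R.
Qed.

Lemma mixture_predicts (mu : Pr) : C mu -> predicts rho mu -> predicts nu mu.
Proof.
move=> Cmu rho_mu; apply: avg_cvg0 => e e0.
pose A := 14 + 8 * ln (#|X|%:R : R).
have A0 : 0 < A.
  have : 0 <= ln (#|X|%:R : R) by rewrite ln_ge0 // ler1n; apply/card_gt0P; exists x0.
  by rewrite /A; lra.
pose k := Num.truncn (2 * A / e).
have hk : A / k.+1%:R <= e / 2.
  rewrite ler_pdivrMr ?ltr0Sn // -ler_pdivrMl ?divr_gt0 //.
  have -> : (e / 2)^-1 * A = 2 * A / e by field; rewrite gt_eqF.
  exact/ltW/truncnS_gt.
have [N1 typ] := typical_eventually _ _ _ k Cmu rho_mu.
have e96 : 0 < e / 96 by rewrite divr_gt0.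
have [N2 hL] := ln_le_mul_eventually (ler0n R k.+1) e96.
pose N3 := (Num.truncn (8 / e)).+1.
exists (maxn (maxn N1 N2) N3) => n; rewrite !geq_max => /andP[/andP[n1 n2] n3].
split; first exact: kl_div_ge0.
apply: le_trans (kl_mixture_le _ _ _ (typ n n1)) _; rewrite lee_fin.
apply: kl_mixture_bound_le => //.
- exact: leq_trans n3.
- have -> : n%:R + k%:R + 2 = n%:R + k.+1%:R + 1 :> R by rewrite -natr1; ring.
  exact: hL.
- have : 8 / e < n%:R by apply: lt_le_trans (truncnS_gt _) _; rewrite ler_nat.
  by rewrite ltr_pdivrMr //; lra.
Qed.

End MixtureEstimate.

Theorem theorem2 (R : realType) (X : finType) (x0 : X)
  (C : set (probability (Xinf x0) R)) :
  C !=set0 ->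
  (exists rho : probability (Xinf x0) R, forall mu, C mu -> predicts rho mu) ->
  exists (mus : nat -> probability (Xinf x0) R) (w : nat -> R),
    (forall k, C (mus k)) /\ (forall k, 0 < w k) /\
    exists nu : probability (Xinf x0) R,
      (forall A : set (Xinf x0), measurable A ->
         nu A = (\sum_(0 <= k <oo) ((w k)%:E * mus k A))%E) /\
      (forall mu, C mu -> predicts nu mu).
Proof.
move=> [mu0 Cmu0] [rho rho_pred].
have [M [comp [Ccomp M_le cover dominates]]] := component_family C rho Cmu0.
have [mus [Cmus musE]] := triple_enumeration Cmu0 Ccomp.
have [nu nuE] := mixture_exists mus.
exists mus, mix_weight; split => //; split; first exact: mix_weight_gt0.
exists nu; split => [A _|mu Cmu]; first exact: nuE.
apply: (mixture_predicts M_le cover dominates _ mu Cmu (rho_pred mu Cmu)) => n k i y.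
by rewrite -musE; exact: pcyl_mixture_ge.
Qed.
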